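(* Consider the quickest change detection setting and the NGLR-CuSum stopping time $\widehat{\tau}(b)$ with window size $m_b$, as defined in the context. Suppose the density estimator is such that there exists $\varsigma>0$ with $$\mathbb{E}_\infty\Big[\max_{n:\,k\le n\le k+m_b}\prod_{i=k}^{n}\frac{\widehat{p}^{n,k}_{-i}(X_i)}{p_0(X_i)}\Big]\le b^{\varsigma}\quad\text{for every } k\ge 1$$ for any large enough $b$. For $\alpha\in(0,1)$ let $b_\alpha$ satisfy $b_\alpha-\varsigma\log b_\alpha=|\log\alpha|+\log 8$. Then $\mathbb{E}_\infty[\widehat{\tau}(b_\alpha)]\ge\alpha^{-1}(1+o(1))$ as $\alpha\to 0$.
   Context: Let $X_1,X_2,\dots\in\mathbb{R}^d$ be independent; for an unknown deterministic change-point $\nu\ge1$, $X_1,\dots,X_{\nu-1}$ have (known) density $p_0$ and $X_\nu,X_{\nu+1},\dots$ have (unknown) density $p_1$, both w.r.t. a dominating measure $\mu$. $\mathbb{P}_\nu,\mathbb{E}_\nu$ denote probability and expectation when the change-point is $\nu$; $\mathbb{P}_\infty,\mathbb{E}_\infty$ when no change occurs (all observations have density $p_0$). A fixed density estimation procedure maps a finite collection of observations to a density w.r.t. $\mu$; for $1\le k\le i\le n$, $\widehat{p}^{n,k}_{-i}$ denotes its output on $X_k,\dots,X_{i-1},X_{i+1},\dots,X_n$. Define $\widehat{Z}^{n,k}_i:=\log\big(\widehat{p}^{n,k}_{-i}(X_i)/p_0(X_i)\big)$ for $k\le i\le n$, and for a threshold $b>0$ and window size $m_b$ (a positive integer depending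 on $b$, with $\liminf_{b\to\infty} m_b/b\ge\eta/I$ for some constant $\eta>1$, where $I:=\mathrm{KL}(p_1\|p_0)=\int_{\mathrm{supp}(p_1)}\log(p_1/p_0)p_1\,d\mu$), the NGLR-CuSum stopping time is $\widehat{\tau}(b):=\inf\{n>1:\max_{(n-m_b)^+<k\le n-1}\sum_{i=k}^n\widehat{Z}^{n,k}_i\ge b\}$, where $(x)^+=\max\{0,x\}$. *)

From HB Require Import structures.
From mathcomp Require Import all_boot all_order all_algebra.
From mathcomp Require Import all_classical all_reals all_analysis.
Set Implicit Arguments. Unset Strict Implicit. Unset Printing Implicit Defensive.
Import Order.TTheory GRing.Theory Num.Theory.
Import numFieldNormedType.Exports.
Local Open Scope classical_set_scope.
Local Open Scope ring_scope.

Section QCD.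
Context {R : realType} {dT : measure_display} {T : measurableType dT}.

Definition is_density (mu : {measure set T -> \bar R}) (f : T -> R) : Prop :=
  measurable_fun setT f /\ (forall x, 0 <= f x) /\
  (\int[mu]_x (f x)%:E = 1)%E.

Definition KL (mu : {measure set T -> \bar R}) (p1 p0 : T -> R) : \bar R :=
  (\int[mu]_(x in [set x | p1 x != 0%R])
     (if p0 x == 0%R then +oo else (ln (p1 x / p0 x) * p1 x)%:E))%E.

Context {d : measure_display} {Omega : measurableType d}.

Definition iid_density (P : probability Omega R) (mu : {measure set T -> \bar R})
    (p0 : T -> R) (X : nat -> Omega -> T) : Prop :=
  (forall i, (0 < i)%N -> measurable_fun setT (X i)) /\
  (forall i, (0 < i)%N -> forall A, measurable A ->
      P (X i @^-1` A) = (\int[mu]_(x in A) (p0 x)%:E)%E) /\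
  (forall (n : nat) (A : nat -> set T), (forall i, measurable (A i)) ->
      P (\bigcap_(i in [set i | (0 < i <= n)%N]) (X i @^-1` A i)) =
      (\prod_(1 <= i < n.+1) P (X i @^-1` A i))%E).

(* the sample X_k, ..., X_{i-1}, X_{i+1}, ..., X_n *)
Definition loo_sample (X : nat -> Omega -> T) (n k i : nat) (w : Omega) : seq T :=
  [seq X j w | j <- iota k (i - k)] ++ [seq X j w | j <- iota i.+1 (n - i)].

Definition phat (est : seq T -> T -> R) (X : nat -> Omega -> T) (n k i : nat)
    (w : Omega) : T -> R := est (loo_sample X n k i w).

Definition lratio (est : seq T -> T -> R) (p0 : T -> R) (X : nat -> Omega -> T)
    (n k i : nat) (w : Omega) : R :=
  phat est X n k i w (X i w) / p0 (X i w).

Definition Zhat (est : seq T -> T -> R) (p0 : T -> R) (X : nat -> Omega -> T)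
    (n k i : nat) (w : Omega) : \bar R :=
  let r := lratio est p0 X n k i w in
  if 0 < r then (ln r)%:E else -oo%E.

Definition nglr_stat (est : seq T -> T -> R) (p0 : T -> R) (X : nat -> Omega -> T)
    (m n : nat) (w : Omega) : \bar R :=
  (\big[maxe/-oo]_((n - m).+1 <= k < n)
     \sum_(k <= i < n.+1) Zhat est p0 X n k i w)%E.

(* NGLR-CuSum stopping time, inf of the empty set = +oo *)
Definition tauhat (est : seq T -> T -> R) (p0 : T -> R) (X : nat -> Omega -> T)
    (m : nat) (b : R) (w : Omega) : \bar R :=
  ereal_inf [set (n%:R)%:E | n in [set n : nat | (1 < n)%N /\
                                   (b%:E <= nglr_stat est p0 X m n w)%E]].

End QCD.

From HB Require Import structures.
From mathcomp Require Import all_boot all_order all_algebra.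
From mathcomp Require Import all_classical all_reals all_analysis.
From mathcomp Require Import measurable_realfun ring lra zify.
Import Order.TTheory GRing.Theory Num.Theory.
Import numFieldNormedType.Exports.
Local Open Scope classical_set_scope.
Local Open Scope ring_scope.

(* Markov's inequality turns the moment hypothesis into: the likelihood
   product over some window starting at k reaches e^b with probability at
   most b^sig e^-b = a/8.  If tauhat < N, the window realising the NGLR
   statistic at the stopping time starts at some 0 < k < N and its product
   reaches e^b.  Taking N ~ 2/a, a union bound gives tauhat >= N with
   probability at least 3/4, hence E tauhat >= 3N/4 >= 1/a. *)

Lemma bigmax_lt_seq d (T : orderType d) (I : Type) (r : seq I) (P : pred I)
    (F : I -> T) (x0 c : T) :
  (x0 < c)%O -> (forall i, P i -> (F i < c)%O) ->
  (\big[Order.max/x0]_(i <- r | P i) F i < c)%O.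
Proof.
by move=> x0c Fc; elim/big_ind: _ => // x y xc yc; rewrite gt_max xc.
Qed.

Section ereal_integral.
Context {R : realType}.
Local Open Scope ereal_scope.

Lemma expeR_sum (I : Type) (r : seq I) (F : I -> \bar R) :
  expeR (\sum_(i <- r) F i) = \prod_(i <- r) expeR (F i).
Proof. exact: (big_morph _ expeRD expeR0). Qed.

Lemma measurable_inv : measurable_fun [set: R] (@GRing.inv R).
Proof.
rewrite -(setUv [set 0%R]); apply/measurable_funU => //.
  exact: measurableC.
split; first exact: measurable_fun_set1.
apply: open_continuous_measurable_fun.
  exact/closed_openC/accessible_closed_set1/hausdorff_accessible/Rhausdorff.
by move=> x /set_mem /eqP x0; exact: inv_continuous.
Qed.

Lemma measurable_bigmaxe d (T : measurableType d) (I : eqType) (r : seq I)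
    (F : I -> T -> \bar R) :
  (forall i, i \in r -> measurable_fun [set: T] (F i)) ->
  measurable_fun [set: T] (fun w => \big[maxe/-oo]_(i <- r) F i w).
Proof.
elim: r => [_|i r IH mF].
  by under eq_fun do rewrite big_nil; exact: measurable_cst.
under eq_fun do rewrite big_cons.
apply: measurable_maxe; first by apply: mF; rewrite mem_head.
by apply: IH => j jr; apply: mF; rewrite inE jr orbT.
Qed.

Context {d : measure_display} {T : measurableType d}.
Variable mu : {measure set T -> \bar R}.

(* No measurability of [g] is needed: the integral of a nonnegative function
   is a supremum over the simple functions below it. *)
Lemma ge0_le_integralT (f g : T -> \bar R) :
  (forall x, 0 <= f x) -> (forall x, f x <= g x) ->
  \int[mu]_x f x <= \int[mu]_x g x.
Proof.
move=> f0 fg; have g0 x : 0 <= g x by exact: le_trans (fg x).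
rewrite !ge0_integralTE //; apply: ereal_sup_le => _ [h hf <-].
by exists h => // x; exact: le_trans (hf x) (fg x).
Qed.

Lemma mul_measure_le_integral (f : T -> \bar R) (A : set T) (c : R) :
  measurable A -> (0 <= c)%R -> (forall x, 0 <= f x) ->
  (forall x, A x -> c%:E <= f x) ->
  c%:E * mu A <= \int[mu]_x f x.
Proof.
move=> mA c0 f0 cf.
have -> : mu A = \int[mu]_x (\1_A x)%:E by rewrite integral_indic // setIT.
rewrite -(integralZl_indic measurableT (fun=> A)) //; last first.
  by move=> c_lt0; move: c0; rewrite leNgt c_lt0.
apply: ge0_le_integralT => x; first by rewrite lee_fin mulr_ge0.
rewrite /indic; case: (boolP (x \in A)) => [/set_mem /cf|_];
  by rewrite ?mulr1 ?mulr0.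
Qed.

End ereal_integral.

Section nglr_cusum.
Context {R : realType} {dT : measure_display} {T : measurableType dT}.
Context {d : measure_display} {Omega : measurableType d}.
Variables (est : seq T -> T -> R) (p0 : T -> R) (X : nat -> Omega -> T).
Hypotheses (est_ge0 : forall s x, 0 <= est s x) (p0_ge0 : forall x, 0 <= p0 x).

Definition window_lr_max (m k : nat) (w : Omega) : \bar R :=
  (\big[maxe/-oo]_(k <= n < (k + m).+1)
     (\prod_(k <= i < n.+1) lratio est p0 X n k i w)%:E)%E.

Lemma lratio_ge0 n k i w : 0 <= lratio est p0 X n k i w.
Proof. by apply: divr_ge0; [exact: est_ge0 | exact: p0_ge0]. Qed.

Lemma expeR_Zhat n k i w :
  expeR (Zhat est p0 X n k i w) = (lratio est p0 X n k i w)%:E.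
Proof.
rewrite /Zhat; case: ifPn => [r_gt0|]; first by rewrite /= lnK.
by rewrite lt_neqAle lratio_ge0 andbT negbK => /eqP <-.
Qed.

Lemma expeR_sum_Zhat n k w :
  expeR (\sum_(k <= i < n.+1) Zhat est p0 X n k i w)%E =
  (\prod_(k <= i < n.+1) lratio est p0 X n k i w)%:E.
Proof.
by rewrite expeR_sum -prodEFin; apply: eq_bigr => i _; exact: expeR_Zhat.
Qed.

Lemma window_lr_max_ge0 m k w : (0 <= window_lr_max m k w)%E.
Proof.
apply: (bigmax_sup_seq _ k) => //.
  by rewrite mem_index_iota leqnn ltnS leq_addr.
by rewrite lee_fin; apply: prodr_ge0 => i _; exact: lratio_ge0.
Qed.

Lemma tauhat_ge m b N w :
  (forall k, (0 < k < N)%N -> (window_lr_max m k w < (expR b)%:E)%E) ->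
  ((N%:R)%:E <= tauhat est p0 X m b w)%E.
Proof.
move=> window_lt; apply/ereal_infP => _ [n [n_gt1 b_le] <-].
rewrite lee_fin ler_nat leqNgt; apply/negP => n_ltN; move: b_le; apply/negP.
rewrite -ltNge /nglr_stat big_nat_cond.
apply: bigmax_lt_seq => [|k /andP[/andP[k_gt k_ltn] _]]; first exact: ltNyr.
rewrite -lte_expeR expeR_sum_Zhat /=.
have k_gt0 : (0 < k)%N by apply: leq_trans k_gt.
apply: le_lt_trans (window_lt k _); last by rewrite k_gt0 (ltn_trans k_ltn).
apply: (le_bigmax_seq _ n) => //.
by rewrite mem_index_iota (ltnW k_ltn) ltnS; lia.
Qed.

Hypotheses (mp0 : measurable_fun setT p0)
  (mX : forall i, (0 < i)%N -> measurable_fun setT (X i))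
  (mphat : forall n k i : nat, (1 <= k <= i)%N -> (i <= n)%N ->
     measurable_fun setT (fun w => phat est X n k i w (X i w))).

Lemma measurable_lratio n k i : (1 <= k <= i)%N -> (i <= n)%N ->
  measurable_fun setT (lratio est p0 X n k i).
Proof.
move=> ki i_le_n; have mXi : measurable_fun setT (X i).
  by apply: mX; case/andP: ki => /leq_trans; apply.
exact: measurable_funM (mphat _ _ _ ki i_le_n)
  (measurableT_comp measurable_inv (measurableT_comp mp0 mXi)).
Qed.

Lemma measurable_window_lr_max m k : (0 < k)%N ->
  measurable_fun setT (window_lr_max m k).
Proof.
move=> k_gt0; apply: measurable_bigmaxe => n.
rewrite mem_index_iota => /andP[kn _].
apply/measurable_EFinP; apply: measurable_prod => i.
rewrite mem_index_iota ltnS => /andP[ki i_le_n].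
by apply: measurable_lratio; rewrite ?k_gt0.
Qed.

Variable P : probability Omega R.

Lemma tauhat_expectation_ge m b c N :
  (forall k, (0 < k)%N -> (\int[P]_w window_lr_max m k w <= c%:E)%E) ->
  ((N%:R * (1 - N%:R * (c / expR b)))%:E <=
     \int[P]_w tauhat est p0 X m b w)%E.
Proof.
move=> window_int.
pose B k := [set w | ((expR b)%:E <= window_lr_max m k.+1 w)%E].
have mB k : measurable (B k).
  rewrite -[B k]setTI; apply: emeasurable_fun_c_infty => //.
  exact: measurable_window_lr_max.
have PB k : (P (B k) <= (c / expR b)%:E)%E.
  rewrite EFinM lee_pdivlMr ?expR_gt0 // muleC.
  exact: le_trans (mul_measure_le_integral P _ _ _ (mB k) (expR_ge0 b)
    (@window_lr_max_ge0 m k.+1) (fun w Bw => Bw)) (window_int k.+1 isT).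
pose U := \big[setU/set0]_(k < N) B k.
have mU : measurable U by apply: bigsetU_measurable => k _; exact: mB.
have PU : (P U <= (N%:R * (c / expR b))%:E)%E.
  apply: le_trans (Boole_inequality P (fun k (_ : (k < N)%N) => mB k)) _.
  apply: le_trans (lee_sum _ (fun (k : 'I_N) _ => PB k)) _.
  by rewrite sumEFin sumr_const card_ord mulr_natl.
have tau_ge w : ~ U w -> ((N%:R)%:E <= tauhat est p0 X m b w)%E.
  move=> Uw; apply: tauhat_ge => k /andP[k_gt0 k_ltN].
  rewrite ltNge; apply/negP => Bk; apply: Uw; rewrite /U -bigcup_mkord.
  exists k.-1; first exact: leq_ltn_trans (leq_pred k) k_ltN.
  by rewrite /B /= prednK.
have tau_ge0 w : (0 <= tauhat est p0 X m b w)%E.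
  by apply/ereal_infP => _ [n _ <-]; rewrite lee_fin ler0n.
apply: (@le_trans _ _ ((N%:R)%:E * P (~` U))%E); last first.
  exact: mul_measure_le_integral (measurableC mU) (ler0n _ N) tau_ge0 tau_ge.
rewrite probability_setC // -(fineK (fin_num_measure P _ mU)) -EFinB -EFinM.
rewrite lee_fin ler_wpM2l // lerB //.
by rewrite -lee_fin fineK // fin_num_measure.
Qed.

End nglr_cusum.

Section threshold.
Context {R : realType}.
Implicit Types a b sig M : R.

Lemma powR_div_expR_threshold sig a b : 0 < a -> 0 < b ->
  b - sig * ln b = - ln a + ln 8 -> b `^ sig / expR b = a / 8.
Proof.
move=> a0 b0 b_eq; rewrite /powR gt_eqF // -expRB.
have -> : sig * ln b - b = ln a - ln 8 by lra.
by rewrite expRB !lnK // posrE.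
Qed.

Lemma threshold_ge sig a b M : 0 < sig -> sig <= b -> 0 < a ->
  a < expR (- (M + sig * `|ln sig|)) ->
  b - sig * ln b = `|ln a| + ln 8 -> M <= b.
Proof.
move=> sig0 sig_b a0 a_lt b_eq.
have ln_a : ln a < - (M + sig * `|ln sig|) by rewrite -ltr_expR lnK.
have ln8 : 0 < ln (8 : R) by rewrite ln_gt0 // ltr1n.
have ln_sig_b : sig * ln sig <= sig * ln b.
  by rewrite ler_pM2l // ler_ln // posrE // (lt_le_trans sig0).
have : - `|ln sig| <= ln sig by rewrite lerNl ler_normr lexx orbT.
rewrite -(ler_pM2l sig0) mulrN => ln_sig.
have ln_a_norm : - ln a <= `|ln a| by rewrite -normrN ler_norm.
lra.
Qed.

Lemma inv_le_union_bound a (N : nat) : 0 < a <= 1 / 2 ->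
  N%:R <= 2 / a < N.+1%:R -> a^-1 <= N%:R * (1 - N%:R * (a / 8)).
Proof.
move=> /andP[a0 a_half] /andP[N_le N_gt].
have Na_le : N%:R * a <= 2 by rewrite -ler_pdivlMr.
have Na_gt : 2 < N%:R * a + a.
  by move: N_gt; rewrite ltr_pdivrMr // -[N.+1%:R]natr1 mulrDl mul1r.
rewrite -[a^-1]mul1r ler_pdivrMr //.
have -> : N%:R * (1 - N%:R * (a / 8)) * a = N%:R * a * (1 - N%:R * a / 8).
  by ring.
nra.
Qed.

End threshold.

Theorem lemma2 (R : realType) (d : measure_display) (Omega : measurableType d)
  (P : probability Omega R) (dim : nat)
  (mu : {measure set (dim.-tuple R) -> \bar R})
  (p0 p1 : dim.-tuple R -> R) (X : nat -> Omega -> dim.-tuple R)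
  (est : seq (dim.-tuple R) -> dim.-tuple R -> R)
  (m : R -> nat) (sig : R) (balpha : R -> R) :
  is_density mu p0 -> is_density mu p1 ->
  iid_density P mu p0 X ->
  (forall s, is_density mu (est s)) ->
  (forall n k i : nat, (1 <= k <= i)%N -> (i <= n)%N ->
     measurable_fun setT (fun w => phat est X n k i w (X i w))) ->
  (forall b, (0 < m b)%N) ->
  (exists eta : R, 1 < eta /\
     forall c : R, (c%:E * KL mu p1 p0 < eta%:E)%E ->
       exists B : R, forall b, B <= b -> c <= (m b)%:R / b) ->
  0 < sig ->
  (exists b0 : R, forall b, b0 <= b -> forall k : nat, (1 <= k)%N ->
     (\int[P]_w
        (\big[maxe/-oo]_(k <= n < (k + m b).+1)
           (\prod_(k <= i < n.+1) lratio est p0 X n k i w)%:E)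
      <= (b `^ sig)%:E)%E) ->
  (forall a, 0 < a < 1 ->
     sig <= balpha a /\ balpha a - sig * ln (balpha a) = `|ln a| + ln 8) ->
  forall eps : R, 0 < eps -> exists delta : R, 0 < delta /\
    forall a, 0 < a < delta -> a < 1 ->
      (((1 - eps) / a)%:E <=
         \int[P]_w tauhat est p0 X (m (balpha a)) (balpha a) w)%E.
Proof.
move=> [mp0 [p0_ge0 _]] _ [mX _] est_density mphat _ _ sig0 [b0 window_int] b_eq
  eps eps0.
have est_ge0 s x : 0 <= est s x by case: (est_density s) => _ [].
set C := b0 + sig * `|ln sig|.
exists (Num.min (1 / 2) (expR (- C))).
split; first by rewrite lt_min expR_gt0 andbT.
move=> a /andP[a0]; rewrite lt_min => /andP[a_half a_C] a1.
have /b_eq[sig_b b_def] : 0 < a < 1 by rewrite a0.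
set b := balpha a in sig_b b_def *.
have b0_b : b0 <= b by exact: threshold_ge sig0 sig_b a0 a_C b_def.
have ratio : b `^ sig / expR b = a / 8.
  apply: powR_div_expR_threshold => //; first exact: lt_le_trans sig_b.
  by rewrite b_def ltr0_norm // ln_lt0 // a0.
have N_itv := truncn_itv (divr_ge0 (ler0n R 2) (ltW a0)).
apply: le_trans _ (tauhat_expectation_ge est p0 X est_ge0 p0_ge0 mp0 mX mphat P
  _ b _ (Num.truncn (2 / a)) (window_int b b0_b)); rewrite ratio lee_fin.
have a_bound : 0 < a <= 1 / 2 by rewrite a0 ltW.
apply: le_trans _ (inv_le_union_bound _ _ a_bound N_itv).
by rewrite ler_piMl ?invr_ge0 ?ltW // ltrBlDr ltrDl.
Qed.
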